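(* Let $\Gamma$ be finite and $\alpha\in V$. The noncommutative formal power series $$P^\alpha-\mu(\alpha)\alpha=\sum_{\substack{n\ge1,\ \epsilon_1\cdots\epsilon_n\text{ a loop in }\vec\Gamma\\ \text{based at }\alpha}}\mathrm{Tr}(X_{\epsilon_1}\cdots X_{\epsilon_n})\,\epsilon_1\cdots\epsilon_n\ \in\ \mathbb C\langle\langle\mathscr X\rangle\rangle$$ is algebraic.
   Context: $\Gamma$ is a finite connected undirected graph (loops, multiple edges allowed), vertex set $V$, weighting $\mu:V\to(0,\infty)$. Directed version $\vec\Gamma$ (edge set $\vec E$): each edge with distinct endpoints $\alpha\ne\beta$ yields $\epsilon,\epsilon^{op}$ with $s(\epsilon)=t(\epsilon^{op})=\alpha$, $t(\epsilon)=s(\epsilon^{op})=\beta$; each loop yields one directed loop $\epsilon=\epsilon^{op}$. $\mathcal C=C_0(V)$, $p_\alpha$ indicator of $\alpha$; $\mathcal X$ the Hilbert $\mathcal C$-$\mathcal C$ bimodule spanned by directed edges with $p_\alpha\epsilon=\delta_{s(\epsilon),\alpha}\epsilon$, $\epsilon p_\alpha=\delta_{t(\epsilon),\alpha}\epsilon$, $\langle\epsilon'|\epsilon\rangle=\delta_{\epsilon,\epsilon'}p_{t(\epsilon)}$; $\mathcal F(\mathcal X)$ its full Fock space with creation operators $\ell(\xi)$. For a loop $e$: $X_e=\ell(\epsilon)+\ell(\epsilon)^*$; for $e$ with endpoints $\alpha\ne\beta$: $a_\epsilon=(\mu(\alpha)/\mu(\beta))^{1/4}$, $X_e=a_\epsilon\ell(\epsilon)+a_\epsilon^{-1}\ell(\epsilon^{op})^*+a_\epsilon^{-1}\ell(\epsilon^{op})+a_\epsilon\ell(\epsilon)^*$;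 $X_\epsilon=p_{s(\epsilon)}X_ep_{t(\epsilon)}$. $\mathrm{Tr}=\mathrm{tr}\circ E$ with $E(x)=PxP$ ($P$ projection onto $\mathcal C$), $\mathrm{tr}(p_v)=\mu(v)$. A loop based at $\alpha$ is a sequence $\epsilon_1,\dots,\epsilon_n$ with $s(\epsilon_1)=\alpha=t(\epsilon_n)$ and $t(\epsilon_k)=s(\epsilon_{k+1})$. Noncommutative series: $\mathscr X=\vec E\cup V$ is a finite alphabet (letters $\epsilon$ and $\alpha$). For a ring $R$ and alphabet $X$, $R\langle\langle X\rangle\rangle$ is the ring of formal sums $\sum_{w}P_ww$ over words $w$ in $X$ (empty word $\mathbf 1$) with coefficients in $R$, with product $(PQ)_w=\sum_{w=uv}P_uQ_v$; $R\langle X\rangle$ is the subring of finite sums. Given a disjoint alphabet $Z=\{z_1,\dots,z_m\}$, a proper algebraic system is a set of equations $z_i=p_i(X,Z)$ with $p_i\in R\langle X\cup Z\rangle$ having no constant term and no term of the form $c z_j$; a solution is $(P_1,\dots,P_m)\in R\langle\langle X\rangle\rangle^m$ with $(P_i)_{\mathbf 1}=0$ and $P_i=p_i(X,P_1,\dots,P_m)$. $P$ is algebraic if $P-P_{\mathbf 1}\mathbf 1$ is a component of a solution of some proper algebraic system. $P^\alpha$ denotes the series $\mu(\alpha)\alpha+\sum_{\text{loops based at }\alpha}\mathrm{Tr}(X_{\epsilon_1}\cdots X_{\epsilon_n})\epsilon_1\cdots\epsilon_n$. *)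

(* Coefficients: C := R[i] with R : realType (a realType is a
   complete archimedean ordered field, i.e. a copy of the reals). *)
From HB Require Import structures.
From mathcomp Require Import all_boot all_order all_algebra.
From mathcomp Require Import complex.
From mathcomp Require Import reals.
Set Implicit Arguments. Unset Strict Implicit. Unset Printing Implicit Defensive.
Import Order.TTheory GRing.Theory Num.Theory.
Local Open Scope ring_scope.

Section NCSeries.
Variables (K : comNzRingType).

Definition ncseries (X : Type) := seq X -> K.

Definition ncone (X : eqType) : ncseries X := fun w => (w == [::])%:R.
Definition ncletter (X : eqType) (x : X) : ncseries X := fun w => (w == [:: x])%:R.

Definition ncmul (X : Type) (P Q : ncseries X) : ncseries X :=
  fun w => \sum_(i < (size w).+1) P (take i w) * Q (drop i w).

(* a noncommutative polynomial in K<Y>: a formal finite linear combination of words *)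
Definition ncpoly (Y : Type) := seq (K * seq Y).

Definition ncpoly_coef (Y : eqType) (p : ncpoly Y) (w : seq Y) : K :=
  \sum_(t <- p) (if t.2 == w then t.1 else 0).

Definition nceval_word (X : eqType) (Y : Type) (sub : Y -> ncseries X) (w : seq Y)
  : ncseries X := foldr (fun y acc => ncmul (sub y) acc) (@ncone X) w.

Definition nceval (X : eqType) (Y : Type) (sub : Y -> ncseries X) (p : ncpoly Y)
  : ncseries X := fun u => \sum_(t <- p) t.1 * nceval_word sub t.2 u.

(* Alphabet X u Z with Z = {z_0, ..., z_(m-1)} *)
Definition nc_subst (X : eqType) (m : nat) (Ps : 'I_m -> ncseries X)
  : (X + 'I_m)%type -> ncseries X :=
  fun y => match y with inl x => ncletter x | inr j => Ps j end.

Definition proper_system (X : eqType) (m : nat) (p : 'I_m -> ncpoly (X + 'I_m)) :=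
  forall i, ncpoly_coef (p i) [::] = 0 /\ forall j, ncpoly_coef (p i) [:: inr j] = 0.

Definition is_solution (X : eqType) (m : nat) (p : 'I_m -> ncpoly (X + 'I_m))
  (Ps : 'I_m -> ncseries X) :=
  forall i, Ps i [::] = 0 /\ forall w, Ps i w = nceval (nc_subst Ps) (p i) w.

Definition nc_algebraic (X : eqType) (P : ncseries X) :=
  exists (m : nat) (p : 'I_m -> ncpoly (X + 'I_m)) (Ps : 'I_m -> ncseries X) (i : 'I_m),
    [/\ proper_system p, is_solution p Ps &
        forall w, P w - P [::] * ncone w = Ps i w].

End NCSeries.

(* Finite graphs (loops and multiple edges allowed).                    *)
(* An undirected edge e has endpoints {end1 e, end2 e}.                 *)
Record graph := Graph {
  gV : finType;
  gE : finType;
  end1 : gE -> gV;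
  end2 : gE -> gV }.

Section Graph.
Variable G : graph.

Definition is_loop (e : gE G) : bool := end1 e == end2 e.

Definition adjacent (u v : gV G) : bool :=
  [exists e : gE G, ((end1 e == u) && (end2 e == v)) || ((end1 e == v) && (end2 e == u))].

Definition connected_graph : Prop := forall u v : gV G, connect adjacent u v.

(* directed edges: a non-loop e gives (e,true) and (e,false); a loop gives (e,true) only *)
Definition dedge := {x : gE G * bool | ~~ is_loop x.1 || x.2}.

Definition dsrc (d : dedge) : gV G :=
  if (val d).2 then end1 (val d).1 else end2 (val d).1.
Definition dtgt (d : dedge) : gV G :=
  if (val d).2 then end2 (val d).1 else end1 (val d).1.

(* epsilon^op (for a loop, epsilon^op = epsilon) *)
Definition dop (d : dedge) : dedge := insubd d ((val d).1, ~~ (val d).2).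

Definition dpos (e : gE G) : dedge := Sub (e, true) (orbT _).

Definition loop_at (a : gV G) (s : seq dedge) : bool :=
  match s with
  | [::] => false
  | d :: s' => [&& dsrc d == a,
                   path (fun x y => dtgt x == dsrc y) d s' &
                   dtgt (last d s') == a]
  end.

(* The full Fock space F(X).  X^{(x) n} has the orthogonal basis of      *)
(* composable paths eps_1 (x) ... (x) eps_n, and C = C(V) the basis p_v. *)
(* A basis element is encoded as (a, s): s a path starting at vertex a  *)
(* (s = [::] encodes p_a).  Vectors are coefficient functions.          *)
Variable R : realType.
Local Notation C := (R[i]).

Definition fock := (gV G * seq dedge)%type -> C.
Definition fop := fock -> fock.

Definition vac (v : gV G) : fock := fun x => ((x.1 == v) && (x.2 == [::]))%:R.

(* creation l(eps): (a', s) with a' = t(eps)  |->  (s(eps), eps :: s) *)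
Definition creat (d : dedge) : fop := fun f x =>
  match x.2 with
  | e' :: s' => if (e' == d) && (x.1 == dsrc d) then f (dtgt d, s') else 0
  | [::] => 0
  end.

(* annihilation l(eps)^* : (s(eps), eps :: s) |-> (t(eps), s); kills the rest *)
Definition annih (d : dedge) : fop := fun f x =>
  if x.1 == dtgt d then f (dsrc d, d :: x.2) else 0.

Definition projv (v : gV G) : fop := fun f x => if x.1 == v then f x else 0.

Definition fop_add (A B : fop) : fop := fun f x => A f x + B f x.
Definition fop_scale (c : C) (A : fop) : fop := fun f x => c * A f x.

Definition afac (mu : gV G -> R) (d : dedge) : R :=
  Num.sqrt (Num.sqrt (mu (dsrc d) / mu (dtgt d))).

Definition Xedge (mu : gV G -> R) (e : gE G) : fop :=
  let eps := dpos e in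
  if is_loop e then fop_add (creat eps) (annih eps)
  else
    let a := (afac mu eps)%:C%C in
    fop_add (fop_add (fop_scale a (creat eps)) (fop_scale a^-1 (annih (dop eps))))
            (fop_add (fop_scale a^-1 (creat (dop eps))) (fop_scale a (annih eps))).

Definition Xd (mu : gV G -> R) (d : dedge) : fop :=
  fun f => projv (dsrc d) (Xedge mu (val d).1 (projv (dtgt d) f)).

Definition Xword (mu : gV G -> R) (s : seq dedge) : fop :=
  foldr (fun d A f => Xd mu d (A f)) id s.

(* Tr = tr o E, E(x) = PxP; for x right C-linear, E(x) = sum_v <p_v, x p_v> p_v *)
Definition Tr (mu : gV G -> R) (A : fop) : C :=
  \sum_(v : gV G) (mu v)%:C%C * A (vac v) (v, [::]).

Definition letter := (dedge + gV G)%type.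

Definition get_dedge (l : letter) : option dedge :=
  if l is inl d then Some d else None.

Definition Palpha (mu : gV G -> R) (a : gV G) : ncseries C letter := fun w =>
  (mu a)%:C%C * (w == [:: inr a])%:R +
  (let s := pmap get_dedge w in
   if (w == map inl s) && loop_at a s then Tr mu (Xword mu s) else 0).

End Graph.

From Pilot Require Import Defs.
From HB Require Import structures.
From mathcomp Require Import all_boot all_order all_algebra.
From mathcomp Require Import complex reals.
From mathcomp Require Import ring.
Set Implicit Arguments. Unset Strict Implicit. Unset Printing Implicit Defensive.
Import Order.TTheory GRing.Theory Num.Theory.
Local Open Scope ring_scope.

(* For a loop s at v, Tr(X_s) = mu(v) <p_v, X_s p_v>: the vacuum-to-vacuum coefficient
   M_v(s) of the word.  Applied at the vacuum, X_d can only create the letter d, and the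
   word then returns to the vacuum exactly when that letter is annihilated by a later dop d.
   Cutting the word at that point gives the first-return equation for the series
   F_v = 1 + sum_s M_v(s) s:
     F_v = 1 + sum_{s(d) = v} w_d . d F_{t(d)} dop(d) F_v,
   and substituting F_v = 1 + z_v / mu(v) turns it into a proper algebraic system whose
   z_alpha-component is the given series. *)

Section NCSeriesTheory.
Variables (K : comNzRingType) (X : eqType).
Implicit Types (P Q S : ncseries K X) (x y : X) (w : seq X) (c : K).

Local Notation one := (ncone K (X := X)).

Lemma ncmul_ext P P' Q Q' : P =1 P' -> Q =1 Q' -> ncmul P Q =1 ncmul P' Q'.
Proof. by move=> PP' QQ' w; apply: eq_bigr => i _; rewrite PP' QQ'. Qed.

Lemma ncmul1l Q : ncmul one Q =1 Q.
Proof.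
case=> [|z w]; rewrite /ncmul big_ord_recl /ncone take0 drop0 eqxx mul1r.
  by rewrite big_ord0 addr0.
by rewrite big1 ?addr0 // => i _; rewrite lift0 mul0r.
Qed.

Lemma ncmul1r P : ncmul P one =1 P.
Proof.
move=> w; rewrite /ncmul big_ord_recr /ncone /= take_size drop_size eqxx mulr1.
rewrite big1 ?add0r // => i _.
by rewrite -size_eq0 size_drop subn_eq0 leqNgt ltn_ord mulr0.
Qed.

Lemma ncmul_letter_nil x Q : ncmul (ncletter K x) Q [::] = 0.
Proof. by rewrite /ncmul big_ord1 /ncletter mul0r. Qed.

Lemma ncmul_letter_cons x Q y w :
  ncmul (ncletter K x) Q (y :: w) = (y == x)%:R * Q w.
Proof.
rewrite /ncmul big_ord_recl big_ord_recl /ncletter /= take0 mul0r add0r.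
rewrite eqseq_cons andbT drop0; case: w => [|z w]; first by rewrite big_ord0 addr0.
by rewrite big1 ?addr0 // => i _; rewrite add0n /bump leq0n eqseq_cons andbF mul0r.
Qed.

Lemma ncmulDl P Q S c w :
  ncmul (fun u => P u + c * Q u) S w = ncmul P S w + c * ncmul Q S w.
Proof. by rewrite /ncmul big_distrr -big_split /=; apply: eq_bigr => i _; ring. Qed.

Lemma ncmulDr P Q S c w :
  ncmul P (fun u => Q u + c * S u) w = ncmul P Q w + c * ncmul P S w.
Proof. by rewrite /ncmul big_distrr -big_split /=; apply: eq_bigr => i _; ring. Qed.

Definition ncaffine c P : ncseries K X := fun u => one u + c * P u.

Variable m : nat.
Implicit Types (p : ncpoly K (X + 'I_m)) (ps : seq (ncpoly K (X + 'I_m))).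
Implicit Types (k : K) (t j : 'I_m).

(* [k x (1 + c z_t) y (1 + c' z_j)], expanded into monomials *)
Definition ncsandwich (k : K) x (t : 'I_m) c y (j : 'I_m) (c' : K) : ncpoly K (X + 'I_m) :=
  [:: (k, [:: inl x; inl y]); (k * c, [:: inl x; inr t; inl y]);
      (k * c', [:: inl x; inl y; inr j]); (k * c * c', [:: inl x; inr t; inl y; inr j])].

Lemma ncpoly_coef_flatten ps (v : seq (X + 'I_m)) :
  ncpoly_coef (flatten ps) v = \sum_(p <- ps) ncpoly_coef p v.
Proof. by rewrite /ncpoly_coef big_flatten. Qed.

Lemma nceval_flatten (sub : X + 'I_m -> ncseries K X) ps w :
  nceval sub (flatten ps) w = \sum_(p <- ps) nceval sub p w.
Proof. by rewrite /nceval big_flatten. Qed.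

Lemma ncsandwich_coef_small k x t c y j c' (v : seq (X + 'I_m)) :
  (size v < 2)%N -> ncpoly_coef (ncsandwich k x t c y j c') v = 0.
Proof.
move=> small; rewrite /ncpoly_coef !big_cons big_nil.
by case: v small => [|? [|? ?]] //= _; rewrite ?eqseq_cons /= ?andbF !addr0.
Qed.

Lemma nceval_ncsandwich (Ps : 'I_m -> ncseries K X) k x t c y j c' w :
  nceval (nc_subst Ps) (ncsandwich k x t c y j c') w =
  k * ncmul (ncletter K x)
        (ncmul (ncaffine c (Ps t)) (ncmul (ncletter K y) (ncaffine c' (Ps j)))) w.
Proof.
rewrite /nceval /ncsandwich !big_cons big_nil addr0 /=.
case: w => [|z w]; first by rewrite !ncmul_letter_nil !mulr0 !addr0.
rewrite !ncmul_letter_cons ncmulDl (ncmul1l _ w) ncmulDr.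
rewrite !(ncmul_ext (frefl (Ps t)) (ncmulDr _ _ _ _)) ncmulDr.
have unit_tail := ncmul_ext (frefl (ncletter K y)) (ncmul1r (Ps j)).
by rewrite unit_tail (ncmul_ext (frefl (Ps t)) unit_tail); ring.
Qed.

End NCSeriesTheory.

Section FockMoments.
Variables (R : realType) (G : graph) (mu : gV G -> R).
Local Notation C := (R[i]).
Local Notation dE := (dedge G).
Implicit Types (d : dE) (s : seq dE) (f : fock G R) (a v : gV G).

Lemma dsrc_dop d : dsrc (dop d) = dtgt d.
Proof.
rewrite /dop /dsrc /dtgt val_insubd.
case: d => [[e [|]] d_ok] /=; rewrite ?orbT ?orbF //= in d_ok *.
by case: (boolP (is_loop e)) => //= /eqP.
Qed.

Lemma dopK : involutive (@dop G).
Proof.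
move=> d; apply: val_inj; rewrite /dop !val_insubd.
case: d => [[e [|]] /= d_ok]; rewrite ?orbT ?orbF ?negbK /= in d_ok *; last by rewrite d_ok.
by case: ifP => //=; case: ifP => //= ->.
Qed.

Lemma dtgt_dop d : dtgt (dop d) = dsrc d.
Proof. by rewrite -[in RHS](dopK d) dsrc_dop. Qed.

Lemma creatE d f a p :
  creat d f (a, p) =
  if p is d' :: p' then ((d' == d) && (a == dsrc d))%:R * f (dtgt d, p') else 0.
Proof. by rewrite /creat /=; case: p => // d' p'; case: ifP; rewrite ?mul1r ?mul0r. Qed.

Lemma annihE d f a p : annih d f (a, p) = (a == dtgt d)%:R * f (dsrc d, d :: p).
Proof. by rewrite /annih /=; case: ifP; rewrite ?mul1r ?mul0r. Qed.

Lemma projvE v f a p : Defs.projv v f (a, p) = (a == v)%:R * f (a, p).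
Proof. by rewrite /Defs.projv /=; case: ifP; rewrite ?mul1r ?mul0r. Qed.

Definition edge_afac d : C := (afac mu (dpos (val d).1))%:C%C.

(* the coefficients with which [X_d] creates resp. annihilates [d] *)
Definition cre_weight d : C :=
  if is_loop (val d).1 then 1 else if (val d).2 then edge_afac d else (edge_afac d)^-1.
Definition ann_weight d : C :=
  if is_loop (val d).1 then 1 else if (val d).2 then (edge_afac d)^-1 else edge_afac d.

Lemma XdE d f a p :
  Xd mu d f (a, p) =
  (a == dsrc d)%:R *
    (cre_weight d * (if p is d' :: p' then (d' == d)%:R * f (dtgt d, p') else 0)
     + ann_weight d * f (dtgt d, dop d :: p)).
Proof.
rewrite /Xd projvE; case: eqP => [->{a}|_]; last by rewrite !mul0r.
rewrite !mul1r; case: d => [[e b] d_ok].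
rewrite /Xedge /cre_weight /ann_weight /edge_afac /=.
set d := exist _ (e, b) d_ok.
case: (boolP (is_loop e)) => loop_e.
  have b_true : b by move: (d_ok); rewrite loop_e.
  have d_pos : d = dpos e by apply: val_inj; rewrite /= b_true.
  have dop_d : dop d = d by apply: val_inj; rewrite /dop val_insubd /= loop_e b_true.
  have src_tgt : dsrc d = dtgt d by rewrite /dsrc /dtgt /= b_true; apply/eqP.
  rewrite -d_pos /fop_add creatE annihE dop_d -src_tgt eqxx !mul1r !projvE.
  rewrite src_tgt eqxx mul1r.
  by case: p => [|d' p'] //; rewrite projvE eqxx mul1r andbT.
have ends_ne : (end1 e == end2 e) = false by apply/negbTE.
case: b in d_ok d *.
  have d_pos : d = dpos e by apply: val_inj.
  rewrite -d_pos /fop_add /fop_scale !creatE !annihE !dsrc_dop !dtgt_dop.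
  rewrite !projvE /dsrc /dtgt /= eqxx ends_ne !mul0r !mulr0 !addr0 mul1r eqxx mul1r.
  case: p => [|d' p']; first by rewrite !mulr0 addr0.
  by rewrite andbT andbF mul0r mulr0 addr0 projvE eqxx mul1r.
have d_neg : dpos e = dop d.
  by rewrite -[dpos e]dopK; congr dop; apply: val_inj; rewrite /dop val_insubd /= loop_e.
rewrite d_neg /fop_add /fop_scale !creatE !annihE !dsrc_dop !dtgt_dop.
have src_tgt : (dsrc d == dtgt d) = false by rewrite /dsrc /dtgt /= eq_sym ends_ne.
rewrite !dopK !dsrc_dop !projvE src_tgt !eqxx !mul0r !mul1r !mulr0 ?add0r ?addr0.
case: p => [|d' p']; first by rewrite !mulr0 !add0r.
by rewrite andbF andbT mul0r mulr0 add0r projvE eqxx mul1r.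
Qed.

Lemma Xword_cons d s f : Xword mu (d :: s) f = Xd mu d (Xword mu s f).
Proof. by []. Qed.

Lemma Xword_vac_split c x p s a q :
  Xword mu s (vac R c) (a, q ++ x :: p) =
  \sum_(i < size s) Xword mu (take i s) (vac R (dsrc x)) (a, q)
      * ((nth x s i == x)%:R * cre_weight x) * Xword mu (drop i.+1 s) (vac R c) (dtgt x, p).
Proof.
elim: s a q => [|d s IH] a q.
  by rewrite big_ord0 /= /vac /=; case: q => [|y q] /=; rewrite andbF.
rewrite Xword_cons XdE big_ord_recl.
under eq_bigr => i _ do rewrite lift0 [take _ _]/= [drop _ _]/= [nth _ _ _]/= Xword_cons XdE.
rewrite [take _ _]/= [drop _ _]/= [nth _ _ _]/= {3}/vac /=.
case: (eqVneq a (dsrc d)) => [->{a}|a_ne]; last first.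
  rewrite mul0r big1 ?addr0 => [|i _]; last by rewrite !mul0r.
  case: (eqVneq d x) => [<-|_]; last by rewrite !(mul0r, mulr0).
  by rewrite (negbTE a_ne) !mul0r.
rewrite !mul1r; case: q => [|y q] /=.
  rewrite (IH _ [:: dop d]) big_distrr /= eqxx andbT.
  congr (_ + _); last by apply: eq_bigr => i _; rewrite mul1r mulr0 add0r !mulrA.
  by case: (eqVneq d x) => [<-|_]; rewrite ?eqxx ?drop0 !(mul1r, mul0r, mulr0).
rewrite IH (IH _ [:: dop d, y & q]) andbF !mul0r add0r !big_distrr -big_split /=.
by apply: eq_bigr => i _; ring.
Qed.

Definition moment v s : C := Xword mu s (vac R v) (v, [::]).

Definition return_weight d : C := ann_weight d * cre_weight (dop d).

Lemma moment_nil v : moment v [::] = 1.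
Proof. by rewrite /moment /= /vac /= !eqxx. Qed.

(* [i] is the position of the letter annihilating what [d] created: the first return
   to the vacuum *)
Lemma moment_cons v d s :
  moment v (d :: s) =
  (v == dsrc d)%:R * return_weight d *
  \sum_(i < size s) moment (dtgt d) (take i s) * (nth (dop d) s i == dop d)%:R
                      * moment v (drop i.+1 s).
Proof.
rewrite /moment Xword_cons XdE mulr0 add0r.
case: eqVneq => [v_src|_]; last by rewrite !mul0r.
rewrite (Xword_vac_split v (dop d) [::] s (dtgt d) [::]) dsrc_dop dtgt_dop -v_src.
by rewrite !big_distrr; apply: eq_bigr => i _ /=; rewrite /return_weight; ring.
Qed.

Fixpoint walk a s c : bool :=
  if s is d :: s' then (a == dsrc d) && walk (dtgt d) s' c else a == c.

Lemma Xword_vac_walk c s a q : Xword mu s (vac R c) (a, q) != 0 -> walk a s c.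
Proof.
elim: s a q => [|d s IH] a q /=.
  by rewrite /vac /=; case: (a == c); rewrite //= eqxx.
rewrite XdE; case: (eqVneq a (dsrc d)) => [_|_]; last by rewrite mul0r eqxx.
have [//|not_walk] := boolP (walk (dtgt d) s c).
have vanish q' : Xword mu s (vac R c) (dtgt d, q') = 0.
  by apply/eqP; apply: contraNT not_walk; apply: IH.
by case: q => [|y q]; rewrite ?vanish !mulr0 ?addr0 mulr0 eqxx.
Qed.

Lemma walk_path d s c :
  walk (dtgt d) s c = path (fun x y => dtgt x == dsrc y) d s && (dtgt (last d s) == c).
Proof. by elim: s d => [|d' s IH] d //=; rewrite IH andbA. Qed.

Lemma loop_at_walk a d s : loop_at a (d :: s) = walk a (d :: s) a.
Proof. by rewrite /loop_at /= walk_path eq_sym andbA. Qed.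

Lemma Tr_Xword_loop a s : loop_at a s -> Tr mu (Xword mu s) = (mu a)%:C%C * moment a s.
Proof.
case: s => [|d s] // loop_s.
have src_d : dsrc d = a by move: loop_s => /and3P[/eqP].
rewrite /Tr (bigD1 a) //= big1 ?addr0 // => v /negbTE v_ne_a.
by rewrite -Xword_cons -/(moment v _) moment_cons src_d v_ne_a !mul0r mulr0.
Qed.

Lemma moment_not_loop a s : s != [::] -> ~~ loop_at a s -> moment a s = 0.
Proof.
case: s => [|d s] // _ not_loop; apply/eqP; apply: contraNT not_loop => nz.
by rewrite loop_at_walk; apply: Xword_vac_walk nz.
Qed.

End FockMoments.

Section MomentSeries.
Variables (R : realType) (G : graph) (mu : gV G -> R).
Local Notation C := (R[i]).
Local Notation dE := (dedge G).
Local Notation L := (letter G).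
Local Notation dedges := (pmap (@get_dedge G)).
Implicit Types (d o : dE) (s : seq dE) (a v t : gV G) (w : seq L).

Definition is_dedge (l : L) : bool := if l is inl _ then true else false.

Definition moment_series v : ncseries C L :=
  fun w => if all is_dedge w then moment mu v (dedges w) else 0.

Lemma dedges_inl s : dedges (map inl s) = s.
Proof. by elim: s => //= d s ->. Qed.

Lemma all_is_dedge_inl s : all is_dedge (map inl s).
Proof. by elim: s. Qed.

Lemma all_is_dedgeP w : all is_dedge w -> w = map inl (dedges w).
Proof. by elim: w => [|[d|u] w IH] //= /IH <-. Qed.

Lemma moment_series_inl v s : moment_series v (map inl s) = moment mu v s.
Proof. by rewrite /moment_series all_is_dedge_inl dedges_inl. Qed.

Lemma moment_series_nil v : moment_series v [::] = 1.
Proof. by rewrite (moment_series_inl v [::]) moment_nil. Qed.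

Lemma ncmul_moment_series t o v w :
  ncmul (moment_series t) (ncmul (ncletter C (inl o)) (moment_series v)) w =
  if all is_dedge w then
    \sum_(i < size (dedges w)) moment mu t (take i (dedges w)) *
       (nth o (dedges w) i == o)%:R * moment mu v (drop i.+1 (dedges w))
  else 0.
Proof.
have [all_w|not_all] := boolP (all is_dedge w); last first.
  rewrite {1}/ncmul big1 // => i _.
  move: not_all; rewrite -{1}(cat_take_drop i w) all_cat negb_and.
  case/orP=> [not_pre|]; first by rewrite /moment_series (negbTE not_pre) mul0r.
  case: (drop i w) => [|[y|u] r] /= not_suf; rewrite ?ncmul_letter_nil ?mulr0 //.
    by rewrite ncmul_letter_cons /moment_series (negbTE not_suf) !mulr0.
  by rewrite ncmul_letter_cons mul0r mulr0.
rewrite (all_is_dedgeP all_w) dedges_inl.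
move: (dedges w) => s; rewrite {1}/ncmul size_map big_ord_recr /=.
rewrite drop_oversize ?size_map // ncmul_letter_nil mulr0 addr0.
apply: eq_bigr => i _; rewrite -map_take moment_series_inl -map_drop.
by rewrite (drop_nth o) ?ltn_ord //= ncmul_letter_cons moment_series_inl mulrA.
Qed.

Lemma moment_series_first_return v w :
  moment_series v w =
  ncone C w + \sum_(d : dE) (v == dsrc d)%:R * return_weight mu d *
    ncmul (ncletter C (inl d))
      (ncmul (moment_series (dtgt d)) (ncmul (ncletter C (inl (dop d))) (moment_series v))) w.
Proof.
case: w => [|y w].
  by rewrite moment_series_nil big1 ?addr0 // => d _; rewrite ncmul_letter_nil mulr0.
rewrite /ncone add0r; under eq_bigr do rewrite ncmul_letter_cons ncmul_moment_series.
case: y => [d0|u]; last by rewrite big1 // => d _; rewrite !(mul0r, mulr0).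
rewrite (bigD1 d0) //= [X in _ + X]big1 ?addr0 => [|d d_ne]; last first.
  by rewrite (inj_eq (@inl_inj _ _)) [d0 == d]eq_sym (negbTE d_ne) !(mul0r, mulr0).
rewrite eqxx mul1r /moment_series /=.
by case: ifP; rewrite ?moment_cons ?mulr0.
Qed.

Lemma Palpha_sub_letter a w :
  Palpha mu a w - (mu a)%:C%C * ncletter C (inr a) w =
  (mu a)%:C%C * (moment_series a w - ncone C w).
Proof.
rewrite /Palpha /ncletter addrAC subrr add0r /moment_series.
have [all_w|not_all] := boolP (all is_dedge w); last first.
  have -> : (w == map inl (dedges w)) = false.
    by apply/negbTE/eqP => w_eq; move: not_all; rewrite w_eq all_is_dedge_inl.
  by case: w not_all => [|y w] //= _; rewrite /ncone subr0 mulr0.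
rewrite (all_is_dedgeP all_w) dedges_inl eqxx.
case: (pmap _ w) => [|d s]; first by rewrite /= moment_nil /ncone subrr mulr0.
rewrite /ncone subr0; case: ifP => [loop_s|/negbT not_loop].
  exact: Tr_Xword_loop.
by rewrite moment_not_loop ?mulr0.
Qed.

End MomentSeries.

Section MomentSystem.
Variables (R : realType) (G : graph) (mu : gV G -> R).
Local Notation C := (R[i]).
Local Notation dE := (dedge G).
Local Notation L := (letter G).
Local Notation m := #|gV G|.
Local Notation weight v := ((mu v)%:C%C : C).
Implicit Types (j : 'I_m) (w : seq L).

Definition inv_weight j : C := (weight (enum_val j))^-1.

Definition scaled_moment j : ncseries C L :=
  fun w => weight (enum_val j) * (moment_series mu (enum_val j) w - ncone C w).

Definition moment_system j : ncpoly C (L + 'I_m) :=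
  flatten [seq ncsandwich (weight (enum_val j) * (enum_val j == dsrc d)%:R * return_weight mu d)
                 (inl d) (enum_rank (dtgt d)) (inv_weight (enum_rank (dtgt d)))
                 (inl (dop d)) j (inv_weight j)
          | d <- enum {: dE}].

Lemma moment_system_proper : proper_system moment_system.
Proof.
move=> j; split=> [|k]; rewrite ncpoly_coef_flatten big_map big1 // => d _;
  exact: ncsandwich_coef_small.
Qed.

Lemma scaled_moment_nil j : scaled_moment j [::] = 0.
Proof. by rewrite /scaled_moment moment_series_nil /ncone eqxx subrr mulr0. Qed.

Hypothesis mu_pos : forall v, 0 < mu v.

Lemma weight_neq0 v : weight v != 0.
Proof.
apply/eqP => /(congr1 (@complex.Re R)) /= mu_v0.
by have := mu_pos v; rewrite mu_v0 ltxx.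
Qed.

Lemma ncaffine_scaled_moment j :
  ncaffine (inv_weight j) (scaled_moment j) =1 moment_series mu (enum_val j).
Proof.
move=> w; rewrite /ncaffine /scaled_moment /inv_weight mulrA mulVf ?weight_neq0 //.
by rewrite mul1r addrC subrK.
Qed.

Lemma moment_system_solution : is_solution moment_system scaled_moment.
Proof.
move=> j; split=> [|w]; first exact: scaled_moment_nil.
rewrite nceval_flatten big_map big_enum /=.
under eq_bigr => d _ do rewrite nceval_ncsandwich
  (ncmul_ext (frefl _) (ncmul_ext (ncaffine_scaled_moment _)
     (ncmul_ext (frefl _) (ncaffine_scaled_moment j)))) enum_rankK.
rewrite /scaled_moment moment_series_first_return (addrC (ncone C w)) addrK.
by rewrite big_distrr; apply: eq_big => [d|d _] /=; rewrite ?inE ?mulrA.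
Qed.

End MomentSystem.

Theorem lemma3p12 (R : realType) (G : graph) (mu : gV G -> R)
  (Gconn : connected_graph G) (mu_pos : forall v, 0 < mu v) (alpha : gV G) :
  nc_algebraic
    (fun w : seq (letter G) => Palpha mu alpha w - (mu alpha)%:C%C * @ncletter _ _ (inr alpha) w).
Proof.
exists #|gV G|, (moment_system mu), (scaled_moment mu), (enum_rank alpha); split.
- exact: moment_system_proper.
- exact: moment_system_solution.
- move=> w; rewrite !Palpha_sub_letter moment_series_nil /ncone /= subrr mulr0 mul0r subr0.
  by rewrite /scaled_moment enum_rankK.
Qed.
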